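(* For every term $\xi\in\Lambda$: if $\xi\Vdash\top,\bot\to\bot$ and $\xi\Vdash\bot,\top\to\bot$, then $\xi\Vdash\top,\top\to\bot$. Consequently, $\lambda x(x)I\,I\Vdash\neg\forall x^{\beth 2}(x\neq0,x\neq1\to\bot)$ and $W\Vdash\forall x^{\beth 2}(\forall y^{\beth 2}(y\neq0,y\neq x\to y\not\le x),x\neq0\to\bot)$.
   Context: Fix an integer $N\ge 0$. The set $\Lambda$ of terms is the smallest set containing the constants $B,C,I,K,W,cc,A$ and $p,q_0,\dots,q_N$, closed under application $(\xi)\eta$ (written $\xi\eta$), and containing, for each sequence $(\xi_i)_{i\in\mathbb N}$ of closed terms (no occurrence of $p,q_0,\dots,q_N$), a constant $\bigwedge_i\xi_i$ (injectively, well-founded). Stacks: finite sequences $t_0\cdot\ldots\cdot t_{n-1}\cdot\pi_0$ of terms, $\pi_0$ the empty stack; $\Pi$ the set of stacks. $\ell_t=((C)(B)CB)t$, $k_{\pi_0}=A$, $k_{t\cdot\pi}=(\ell_t)k_\pi$; $\sigma=(BW)(C)(B)BB$, $\underline0=(K)I$, $\underline{n+1}=(\sigma)\underline n$. Execution $\succ$: least preorder on $\Lambda\times\Pi$ with $(\xi)\eta\star\pi\succ\xi\star\eta\cdot\pi$; $B\star\xi\cdot\eta\cdot\zeta\cdot\pi\succ\xi\star(\eta)\zeta\cdot\pi$; $C\star\xi\cdot\eta\cdot\zeta\cdot\pi\succ\xi\star\zeta\cdot\eta\cdot\pi$; $I\star\xi\cdot\pi\succ\xi\star\pi$; $K\star\xi\cdot\eta\cdot\pi\succ\xi\star\pi$;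 $W\star\xi\cdot\eta\cdot\pi\succ\xi\star\eta\cdot\eta\cdot\pi$; $cc\star\xi\cdot\pi\succ\xi\star k_\pi\cdot\pi$; $A\star\xi\cdot\pi\succ\xi\star\pi_0$; $\bigwedge_i\xi_i\star\underline n\cdot\pi\succ\xi_n\star\pi$. Pole $\perp\!\!\!\perp=\{\xi\star\pi:\exists\varpi,\ \xi\star\pi\succ p\star\varpi\}$. $\lambda$-terms are translated into terms by the usual combinatory translation. Realizability (Krivine): $\xi\Vdash F$ iff $\xi\star\pi\in\perp\!\!\!\perp$ for all $\pi\in\|F\|$, with $\|\bot\|=\Pi$, $\|\top\|=\emptyset$, $\|A\to B\|=\{\eta\cdot\pi:\eta\Vdash A,\pi\in\|B\|\}$, $A_1,A_2\to B$ means $A_1\to(A_2\to B)$, $\neg A$ means $A\to\bot$, $\|\forall x F[x]\|=\bigcup_a\|F[a]\|$. $\beth2$ is the characteristic Boolean algebra of the realizability model, with underlying set $\{0,1\}$ (ordered by $0\le1$); the relativized quantifier satisfies $\|\forall x^{\beth 2}F[x]\|=\|F[0]\|\cup\|F[1]\|$, and for $a,b\in\{0,1\}$ the atomic formulas $a\neq b$, $a\not\le b$ are interpreted as $\top$ when true and $\bot$ when false. *)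

From Stdlib Require Import List Relations Bool Arith.
Import ListNotations.

(* Raw syntax of terms. [Tq i] is q_i; [Conj f] is the constant /\_i f i.
   The actual set Lambda is carved out by [wf N] below (q_i only for i <= N,
   and /\_i xi_i only for sequences of closed terms). *)
Inductive term : Type :=
| TB | TC | TI | TK | TW | Tcc | TA
| Tp
| Tq (i : nat)
| App (t u : term)
| Conj (f : nat -> term).

Fixpoint closed (t : term) : Prop :=
  match t with
  | Tp => False
  | Tq _ => False
  | App t u => closed t /\ closed u
  | Conj f => forall i, closed (f i)
  | _ => True
  end.

Fixpoint wf (N : nat) (t : term) : Prop :=
  match t with
  | Tq i => i <= N
  | App t u => wf N t /\ wf N u
  | Conj f => forall i, closed (f i) /\ wf N (f i)
  | _ => True
  end.

(* stacks: finite sequences of terms, the empty list is pi_0 *)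
Definition stack := list term.
Definition stack_wf (N : nat) (s : stack) : Prop := Forall (wf N) s.

Definition ell (t : term) : term := App (App TC (App (App TB TC) TB)) t.
Fixpoint kst (s : stack) : term :=
  match s with
  | [] => TA
  | t :: s' => App (ell t) (kst s')
  end.
(* sigma = (BW)(C)(B)BB = (B W) (C ((B B) B)) *)
Definition sigma : term := App (App TB TW) (App TC (App (App TB TB) TB)).
Fixpoint num (n : nat) : term :=
  match n with
  | 0 => App TK TI
  | S n' => App sigma (num n')
  end.

Definition process := (term * stack)%type.

Inductive step : process -> process -> Prop :=
| st_app x y s : step (App x y, s) (x, y :: s)
| st_B x y z s : step (TB, x :: y :: z :: s) (x, App y z :: s)
| st_C x y z s : step (TC, x :: y :: z :: s) (x, z :: y :: s)
| st_I x s : step (TI, x :: s) (x, s)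
| st_K x y s : step (TK, x :: y :: s) (x, s)
| st_W x y s : step (TW, x :: y :: s) (x, y :: y :: s)
| st_cc x s : step (Tcc, x :: s) (x, kst s :: s)
| st_A x s : step (TA, x :: s) (x, [])
| st_Conj f n s : step (Conj f, num n :: s) (f n, s).

Definition exec : relation process := clos_refl_trans process step.

Definition pole (t : term) (s : stack) : Prop :=
  exists w, exec (t, s) (Tp, w).

Definition fv := stack -> Prop.

Definition realizes (N : nat) (t : term) (F : fv) : Prop :=
  forall s, F s -> pole t s.

Definition Bot (N : nat) : fv := stack_wf N.
Definition Top : fv := fun _ => False.

Definition arr (N : nat) (A B : fv) : fv :=
  fun s => match s with
           | [] => False
           | e :: s' => wf N e /\ realizes N e A /\ B s'
           end.

Definition neg (N : nat) (A : fv) : fv := arr N A (Bot N).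

(* beth2 has underlying set {0,1}; we use bool with 0 = false, 1 = true,
   ordered by false <= true. *)
Definition all2 (F : bool -> fv) : fv := fun s => F false s \/ F true s.
Definition neq2 (N : nat) (a b : bool) : fv := if Bool.eqb a b then Bot N else Top.
Definition le2 (a b : bool) : bool := implb a b.
Definition nle2 (N : nat) (a b : bool) : fv := if le2 a b then Bot N else Top.

(* lambda-terms and the usual combinatory translation (bracket abstraction
   for the basis B, C, I, K, W) *)
Inductive lam : Type :=
| LVar (x : nat)
| LApp (t u : lam)
| LAbs (x : nat) (t : lam)
| LCst (c : term).

Inductive cl : Type :=
| CV (x : nat)
| CT (c : term)
| CA (t u : cl).

Fixpoint occurs (x : nat) (c : cl) : bool :=
  match c with
  | CV y => Nat.eqb x y
  | CT _ => false
  | CA t u => occurs x t || occurs x u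
  end.

Fixpoint abs (x : nat) (c : cl) : cl :=
  if negb (occurs x c) then CA (CT TK) c else
  match c with
  | CV _ => CT TI
  | CT c => CA (CT TK) (CT c)
  | CA t u =>
      if negb (occurs x u) then CA (CA (CT TC) (abs x t)) u
      else if negb (occurs x t) then CA (CA (CT TB) t) (abs x u)
      else CA (CT TW) (CA (CA (CT TC) (CA (CA (CT TB) (CT TB)) (abs x t))) (abs x u))
  end.

Fixpoint lam_to_cl (t : lam) : cl :=
  match t with
  | LVar x => CV x
  | LApp t u => CA (lam_to_cl t) (lam_to_cl u)
  | LAbs x t => abs x (lam_to_cl t)
  | LCst c => CT c
  end.

Fixpoint cl_to_term (c : cl) : option term :=
  match c with
  | CV _ => None
  | CT t => Some t
  | CA t u => match cl_to_term t, cl_to_term u with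
              | Some a, Some b => Some (App a b)
              | _, _ => None
              end
  end.

Definition translate (t : lam) : option term := cl_to_term (lam_to_cl t).

Definition lam_xII : lam := LAbs 0 (LApp (LApp (LVar 0) (LCst TI)) (LCst TI)).

From Stdlib Require Import List Relations Bool.
Import ListNotations.

(* Execution is deterministic, so a run of [xi * a.b.pi] reaching [p] can be
   replayed with [a] and [b] treated as opaque placeholders, as long as neither
   of them comes to head position.  Take for [a] the looping term [(((W)W)W)p],
   which realizes [top] vacuously, and for [b] the constant [p], which realizes
   [bot].  If both [xi * a.p.pi] and [xi * p.a.pi] reach [p], no placeholder can
   ever reach head position, since in one of the two runs it would be the
   looping [a].  So the run does not depend on the two arguments, and
   [xi * eta.eta'.pi] reaches [p] for all [eta, eta'].  Both placeholders
   contain [p], so they can never be mistaken for a numeral read by a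
   constant [/\_i xi_i]. *)

Fixpoint has_p (t : term) : bool :=
  match t with
  | Tp => true
  | App u v => has_p u || has_p v
  | _ => false
  end.

Lemma has_p_num n : has_p (num n) = false.
Proof. induction n; simpl; auto. Qed.

Lemma num_inj n m : num n = num m -> n = m.
Proof.
  revert m; induction n; intros [|m] H; simpl in H; try discriminate; auto.
  injection H as H; f_equal; auto.
Qed.

Lemma step_deterministic X Y Z : step X Y -> step X Z -> Y = Z.
Proof.
  intros H1 H2; destruct H1; inversion H2; subst; auto.
  match goal with H : num _ = num _ |- _ => apply num_inj in H; subst; auto end.
Qed.

Lemma pole_Tp s : pole Tp s.
Proof. exists s; apply rt_refl. Qed.

Lemma pole_step_back t s t' s' : step (t, s) (t', s') -> pole t' s' -> pole t s.
Proof.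
  intros Hst [w Hw]; exists w.
  eapply rt_trans; [apply rt_step, Hst | exact Hw].
Qed.

Lemma pole_step_forward t s t' s' : step (t, s) (t', s') -> pole t s -> pole t' s'.
Proof.
  intros Hst [w Hw]; apply clos_rt_rt1n in Hw.
  remember (Tp, w) as Z eqn:EZ; destruct Hw as [| Y Z HY HYw]; subst.
  - injection EZ as -> ->; inversion Hst.
  - rewrite <- (step_deterministic _ _ _ Hst HY) in HYw.
    exists w; apply clos_rt1n_rt, HYw.
Qed.

Definition omega_p : term := App (App (App TW TW) TW) Tp.

Lemma omega_p_inert s : ~ pole omega_p s.
Proof.
  set (orbit := fun X : process =>
    X = (omega_p, s) \/ X = (App (App TW TW) TW, Tp :: s) \/
    X = (App TW TW, TW :: Tp :: s) \/ X = (TW, TW :: TW :: Tp :: s)).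
  assert (Hinv : forall X Y, exec X Y -> orbit X -> orbit Y).
  { induction 1; auto.
    intros [E|[E|[E|E]]]; subst; inversion H; subst; unfold orbit; tauto. }
  intros [w Hw].
  destruct (Hinv _ _ Hw (or_introl eq_refl)) as [E|[E|[E|E]]]; discriminate.
Qed.

Inductive pattern : Type :=
| PTerm (t : term)
| PHoleL
| PHoleR
| PApp (u v : pattern).

Fixpoint plug (a b : term) (m : pattern) : term :=
  match m with
  | PTerm t => t
  | PHoleL => a
  | PHoleR => b
  | PApp u v => App (plug a b u) (plug a b v)
  end.

Definition plug_proc (a b : term) (P : pattern * list pattern) : process :=
  (plug a b (fst P), map (plug a b) (snd P)).

Lemma map_plug_PTerm a b s : map (plug a b) (map PTerm s) = s.
Proof. induction s; simpl; f_equal; auto. Qed.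

Lemma plug_without_p a b m :
  has_p a = true -> has_p b = true -> has_p (plug a b m) = false ->
  forall a' b', plug a' b' m = plug a b m.
Proof.
  intros Ha Hb; induction m as [t| | |u IHu v IHv]; simpl; intros H a' b'; try congruence.
  apply orb_false_iff in H as [Hu Hv]; rewrite IHu, IHv; auto.
Qed.

Fixpoint pkst (ms : list pattern) : pattern :=
  match ms with
  | [] => PTerm TA
  | m :: ms' => PApp (PApp (PApp (PTerm TC) (PTerm (App (App TB TC) TB))) m) (pkst ms')
  end.

Lemma plug_pkst a b ms : plug a b (pkst ms) = kst (map (plug a b) ms).
Proof. induction ms; simpl; rewrite ?IHms; reflexivity. Qed.

Inductive pstep : pattern * list pattern -> pattern * list pattern -> Prop :=
| pst_app u v ms : pstep (PApp u v, ms) (u, v :: ms)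
| pst_term_app t u ms : pstep (PTerm (App t u), ms) (PTerm t, PTerm u :: ms)
| pst_B x y z ms : pstep (PTerm TB, x :: y :: z :: ms) (x, PApp y z :: ms)
| pst_C x y z ms : pstep (PTerm TC, x :: y :: z :: ms) (x, z :: y :: ms)
| pst_I x ms : pstep (PTerm TI, x :: ms) (x, ms)
| pst_K x y ms : pstep (PTerm TK, x :: y :: ms) (x, ms)
| pst_W x y ms : pstep (PTerm TW, x :: y :: ms) (x, y :: y :: ms)
| pst_cc x ms : pstep (PTerm Tcc, x :: ms) (x, pkst ms :: ms)
| pst_A x ms : pstep (PTerm TA, x :: ms) (x, [])
| pst_Conj f n m ms : (forall a b, plug a b m = num n) ->
    pstep (PTerm (Conj f), m :: ms) (PTerm (f n), ms).

Lemma step_plug a b P Q : pstep P Q -> step (plug_proc a b P) (plug_proc a b Q).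
Proof.
  destruct 1; unfold plug_proc; simpl; try constructor.
  - rewrite plug_pkst; constructor.
  - rewrite H; constructor.
Qed.

Lemma pstep_of_step a b m ms Y :
  has_p a = true -> has_p b = true -> m <> PHoleL -> m <> PHoleR ->
  step (plug a b m, map (plug a b) ms) Y ->
  exists Q, pstep (m, ms) Q /\ Y = plug_proc a b Q.
Proof.
  intros Ha Hb HL HR Hs.
  destruct m as [t| | |u v]; try congruence; simpl in Hs.
  2: { inversion Hs; subst; eexists; split; [constructor | reflexivity]. }
  destruct t; destruct ms as [|m1 [|m2 [|m3 ms]]]; inversion Hs; subst;
    try (eexists; split;
         [constructor | unfold plug_proc; simpl; rewrite ?plug_pkst; reflexivity]).
  all: match goal with
       | E : num _ = _ |- _ =>
           intros a' b'; rewrite E;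
           apply plug_without_p; rewrite <- ?E; auto using has_p_num
       end.
Qed.

Section Swap.

Variables a b : term.
Hypothesis a_has_p : has_p a = true.
Hypothesis b_has_p : has_p b = true.
Hypothesis a_inert : forall s, ~ pole a s.

Lemma swap_head_not_hole m ms ms' :
  pole (plug a b m) ms -> pole (plug b a m) ms' -> m <> PHoleL /\ m <> PHoleR.
Proof. intros H1 H2; split; intros ->; eapply a_inert; eauto. Qed.

Lemma pole_plug_uniform X Z :
  clos_refl_trans_1n _ step X Z ->
  forall m ms w, X = (plug a b m, map (plug a b) ms) -> Z = (Tp, w) ->
  pole (plug b a m) (map (plug b a) ms) ->
  forall e1 e2, pole (plug e1 e2 m) (map (plug e1 e2) ms).
Proof.
  induction 1 as [X | X Y Z HXY HYZ IH]; intros m ms w EX EZ Hba e1 e2; subst.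
  - injection EZ as Em _.
    destruct (swap_head_not_hole m w _ ltac:(rewrite Em; apply pole_Tp) Hba) as [HL HR].
    destruct m; simpl in Em; try congruence.
    subst; apply pole_Tp.
  - assert (Hab : pole (plug a b m) (map (plug a b) ms)).
    { exists w; eapply rt_trans; [apply rt_step, HXY | apply clos_rt1n_rt, HYZ]. }
    destruct (swap_head_not_hole m _ _ Hab Hba) as [HL HR].
    destruct (pstep_of_step a b m ms Y a_has_p b_has_p HL HR HXY)
      as [[m' ms'] [HQ ->]].
    eapply pole_step_back; [apply (step_plug e1 e2 _ _ HQ) |].
    eapply IH; [reflexivity | reflexivity |].
    eapply pole_step_forward; [apply (step_plug b a _ _ HQ) | exact Hba].
Qed.

Lemma pole_swap_uniform xi s :
  pole xi (a :: b :: s) -> pole xi (b :: a :: s) ->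
  forall e1 e2, pole xi (e1 :: e2 :: s).
Proof.
  intros [w Hw] Hba e1 e2.
  pose proof (pole_plug_uniform _ _ (clos_rt_rt1n _ _ _ _ Hw)
                (PTerm xi) (PHoleL :: PHoleR :: map PTerm s) w) as H.
  simpl in H; rewrite !map_plug_PTerm in H.
  specialize (H eq_refl eq_refl Hba e1 e2).
  rewrite map_plug_PTerm in H; exact H.
Qed.

End Swap.

Lemma realizes_Top N t : realizes N t Top.
Proof. intros s []. Qed.

Lemma realizes_Tp_Bot N : realizes N Tp (Bot N).
Proof. intros s _; apply pole_Tp. Qed.

Lemma realizes_arr2_pole N A B C t e e' s :
  realizes N t (arr N A (arr N B C)) ->
  wf N e -> realizes N e A -> wf N e' -> realizes N e' B -> C s ->
  pole t (e :: e' :: s).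
Proof. intros Ht; intros; apply Ht; simpl; repeat split; assumption. Qed.

Theorem realizes_top_top N C xi :
  realizes N xi (arr N Top (arr N (Bot N) C)) ->
  realizes N xi (arr N (Bot N) (arr N Top C)) ->
  realizes N xi (arr N Top (arr N Top C)).
Proof.
  intros H1 H2 [|e [|e' s]] Hs; simpl in Hs; try tauto.
  destruct Hs as (He & _ & He' & _ & Hs).
  assert (Hw : wf N omega_p) by (simpl; tauto).
  apply (pole_swap_uniform omega_p Tp eq_refl eq_refl omega_p_inert);
    [ apply (realizes_arr2_pole N _ _ _ _ _ _ _ H1)
    | apply (realizes_arr2_pole N _ _ _ _ _ _ _ H2) ];
    simpl; auto using realizes_Top, realizes_Tp_Bot.
Qed.

Lemma translate_lam_xII :
  translate lam_xII = Some (App (App TC (App (App TC TI) TI)) TI).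
Proof. reflexivity. Qed.

Lemma realizes_beth2_two_valued N :
  realizes N (App (App TC (App (App TC TI) TI)) TI)
    (neg N (all2 (fun x => arr N (neq2 N x false) (arr N (neq2 N x true) (Bot N))))).
Proof.
  intros [|e s] Hs; simpl in Hs; try tauto.
  destruct Hs as (He & Hr & Hs).
  repeat (eapply pole_step_back; [constructor |]).
  apply (realizes_arr2_pole N Top Top (Bot N)); simpl; auto using realizes_Top.
  apply realizes_top_top; intros s' Hs'; apply Hr; [right | left]; exact Hs'.
Qed.

Lemma realizes_beth2_no_atom N :
  realizes N TW
    (all2 (fun x =>
       arr N (all2 (fun y => arr N (neq2 N y false) (arr N (neq2 N y x) (nle2 N y x))))
             (arr N (neq2 N x false) (Bot N)))).
Proof.
  intros [|e [|e' s]] Hs; unfold all2 in Hs; simpl in Hs; try tauto.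
  destruct Hs as [(He & Hr & He' & Hr' & Hs) | (He & Hr & He' & Hr' & Hs)];
    (eapply pole_step_back; [constructor |]).
  - apply (realizes_arr2_pole N (Bot N) (Bot N) (Bot N)); auto.
    intros s' Hs'; apply Hr; left; exact Hs'.
  - apply (realizes_arr2_pole N Top Top (Bot N)); auto.
    apply realizes_top_top; intros s' Hs'; apply Hr; [right | left]; exact Hs'.
Qed.

Theorem corollary1 (N : nat) :
  (forall xi : term, wf N xi ->
     realizes N xi (arr N Top (arr N (Bot N) (Bot N))) ->
     realizes N xi (arr N (Bot N) (arr N Top (Bot N))) ->
     realizes N xi (arr N Top (arr N Top (Bot N))))
  /\
  (exists t : term, translate lam_xII = Some t /\
     realizes N t
       (neg N (all2 (fun x => arr N (neq2 N x false) (arr N (neq2 N x true) (Bot N))))))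
  /\
  realizes N TW
    (all2 (fun x =>
       arr N (all2 (fun y => arr N (neq2 N y false) (arr N (neq2 N y x) (nle2 N y x))))
             (arr N (neq2 N x false) (Bot N)))).
Proof.
  split; [| split].
  - intros xi _; apply realizes_top_top.
  - eexists; split; [apply translate_lam_xII | apply realizes_beth2_two_valued].
  - apply realizes_beth2_no_atom.
Qed.
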